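(* Let $\mathbf A$ be a residuated semigroup satisfying $xx=x$ and $x\backslash x=y/y$ for all $x,y$. Then the element $1:=a\backslash a$ does not depend on $a$, it is the greatest element and a global identity of $\mathbf A$; $\langle A,\le\rangle$ is a meet-semilattice whose meet is $x\wedge y=xy$; and $x\wedge y\le z\iff y\le x\backslash z$ for all $x,y,z$, so $\langle A,\wedge,\backslash,1\rangle$ is a Brouwerian semilattice. In particular, every integrally closed residuated monoid satisfying $xx=x$ is a Brouwerian semilattice in this way.
   Context: A residuated semigroup is a structure $\langle A,\le,\cdot,\backslash,/\rangle$ where $\langle A,\le\rangle$ is a poset, $\langle A,\cdot\rangle$ is a semigroup, and $xy\le z\iff x\le z/y\iff y\le x\backslash z$. A residuated monoid is a residuated semigroup with a global identity $1$ ($1a=a=a1$); it is integrally closed if $x\backslash x=1$ for all $x$. A Brouwerian semilattice is a meet-semilattice $\langle A,\wedge\rangle$ with top element $1$ and a binary operation $\to$ such that $x\wedge y\le z\iff y\le x\to z$. *)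

Definition is_poset {A : Type} (le : A -> A -> Prop) : Prop :=
  (forall x, le x x) /\
  (forall x y, le x y -> le y x -> x = y) /\
  (forall x y z, le x y -> le y z -> le x z).

(* Residuated semigroup <A, le, mul, ldiv, rdiv>:
   ldiv x z = x \ z,  rdiv z y = z / y. *)
Definition residuated_semigroup {A : Type} (le : A -> A -> Prop)
  (mul ldiv rdiv : A -> A -> A) : Prop :=
  is_poset le /\
  (forall x y z, mul (mul x y) z = mul x (mul y z)) /\
  (forall x y z, (le (mul x y) z <-> le x (rdiv z y)) /\
                 (le (mul x y) z <-> le y (ldiv x z))).

Definition residuated_monoid {A : Type} (le : A -> A -> Prop)
  (mul ldiv rdiv : A -> A -> A) (one : A) : Prop :=
  residuated_semigroup le mul ldiv rdiv /\
  (forall a, mul one a = a /\ mul a one = a).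

Definition integrally_closed {A : Type} (ldiv : A -> A -> A) (one : A) : Prop :=
  forall x, ldiv x x = one.

Definition meet_semilattice_of {A : Type} (le : A -> A -> Prop) (meet : A -> A -> A) : Prop :=
  forall x y, le (meet x y) x /\ le (meet x y) y /\
              (forall z, le z x -> le z y -> le z (meet x y)).

Definition brouwerian_semilattice {A : Type} (le : A -> A -> Prop)
  (meet imp : A -> A -> A) (top : A) : Prop :=
  meet_semilattice_of le meet /\
  (forall x, le x top) /\
  (forall x y z, le (meet x y) z <-> le y (imp x z)).

From Stdlib Require Import Setoid.

(** Idempotence gives [x <= x \ x], so when the [x \ x] all equal some [t],
    [t] is the top element; if the [x / x] equal [t] too, then [t x <= x] and
    [x = x x <= t x], so [t] is a two-sided identity.
    With a top identity, [x y <= x t = x], [x y <= t y = y], and any common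
    lower bound [z] of [x] and [y] satisfies [z = z z <= x y]: the product is
    the meet, and residuation becomes the Brouwerian adjunction. *)

Section IdempotentResiduatedSemigroup.

Variables (A : Type) (le : A -> A -> Prop) (mul ldiv rdiv : A -> A -> A).
Hypothesis residuated : residuated_semigroup le mul ldiv rdiv.
Hypothesis mulxx : forall x, mul x x = x.

Let le_refl : forall x, le x x.
Proof. apply residuated. Qed.

Let le_anti : forall x y, le x y -> le y x -> x = y.
Proof. apply residuated. Qed.

Let le_trans : forall x y z, le x y -> le y z -> le x z.
Proof. apply residuated. Qed.

Let le_rdiv : forall x y z, le (mul x y) z <-> le x (rdiv z y).
Proof. apply residuated. Qed.

Let le_ldiv : forall x y z, le (mul x y) z <-> le y (ldiv x z).
Proof. apply residuated. Qed.

Lemma mul_mono_r x y y' : le y y' -> le (mul x y) (mul x y').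
Proof.
  intros le_yy'. apply le_ldiv, le_trans with y'; [exact le_yy' |].
  apply le_ldiv, le_refl.
Qed.

Lemma mul_mono_l x x' y : le x x' -> le (mul x y) (mul x' y).
Proof.
  intros le_xx'. apply le_rdiv, le_trans with x'; [exact le_xx' |].
  apply le_rdiv, le_refl.
Qed.

Lemma le_ldivxx x : le x (ldiv x x).
Proof. apply le_ldiv. rewrite mulxx. apply le_refl. Qed.

Section TopElement.

Variable top : A.
Hypothesis le_top : forall x, le x top.

Lemma le_mul_top_l x : le x (mul top x).
Proof. rewrite <- (mulxx x) at 1. apply mul_mono_l, le_top. Qed.

Lemma le_mul_top_r x : le x (mul x top).
Proof. rewrite <- (mulxx x) at 1. apply mul_mono_r, le_top. Qed.

Lemma top_unit_of_divxx :
  (forall x, ldiv x x = top) -> (forall x, rdiv x x = top) ->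
  forall x, mul top x = x /\ mul x top = x.
Proof.
  intros ldivxx rdivxx x. split; apply le_anti.
  - apply le_rdiv. rewrite rdivxx. apply le_refl.
  - apply le_mul_top_l.
  - apply le_ldiv. rewrite ldivxx. apply le_refl.
  - apply le_mul_top_r.
Qed.

Hypothesis top_unit : forall x, mul top x = x /\ mul x top = x.

Lemma mul_le_l x y : le (mul x y) x.
Proof. rewrite <- (proj2 (top_unit x)) at 2. apply mul_mono_r, le_top. Qed.

Lemma mul_le_r x y : le (mul x y) y.
Proof. rewrite <- (proj1 (top_unit y)) at 2. apply mul_mono_l, le_top. Qed.

Lemma le_mul_of_le z x y : le z x -> le z y -> le z (mul x y).
Proof.
  intros le_zx le_zy. rewrite <- (mulxx z).
  apply le_trans with (mul x z); [apply mul_mono_l | apply mul_mono_r]; assumption.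
Qed.

Lemma brouwerian_of_top_unit : brouwerian_semilattice le mul ldiv top.
Proof.
  split; [| split; [exact le_top | exact le_ldiv]].
  intros x y. split; [apply mul_le_l | split; [apply mul_le_r | intros z; apply le_mul_of_le]].
Qed.

End TopElement.

End IdempotentResiduatedSemigroup.

Lemma ldivxx_const (A : Type) (ldiv rdiv : A -> A -> A) :
  (forall x y, ldiv x x = rdiv y y) -> forall a b, ldiv a a = ldiv b b.
Proof. intros ldivxx_rdivyy a b. now rewrite (ldivxx_rdivyy a a), (ldivxx_rdivyy b a). Qed.

Theorem corollary7p3 :
  (forall (A : Type) (le : A -> A -> Prop) (mul ldiv rdiv : A -> A -> A),
    residuated_semigroup le mul ldiv rdiv ->
    (forall x, mul x x = x) ->
    (forall x y, ldiv x x = rdiv y y) ->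
    (forall a b, ldiv a a = ldiv b b) /\
    (forall a, (forall x, le x (ldiv a a)) /\
               (forall x, mul (ldiv a a) x = x /\ mul x (ldiv a a) = x) /\
               brouwerian_semilattice le mul ldiv (ldiv a a))) /\
  (forall (A : Type) (le : A -> A -> Prop) (mul ldiv rdiv : A -> A -> A) (one : A),
    residuated_monoid le mul ldiv rdiv one ->
    integrally_closed ldiv one ->
    (forall x, mul x x = x) ->
    brouwerian_semilattice le mul ldiv one).
Proof.
  split.
  - intros A le mul ldiv rdiv residuated mulxx ldivxx_rdivyy.
    pose proof (ldivxx_const A ldiv rdiv ldivxx_rdivyy) as ldivxx_eq.
    split; [exact ldivxx_eq |]. intros a.
    assert (le_top : forall x, le x (ldiv a a)).
    { intros x. rewrite (ldivxx_eq a x).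
      exact (le_ldivxx A le mul ldiv rdiv residuated mulxx x). }
    assert (top_unit : forall x, mul (ldiv a a) x = x /\ mul x (ldiv a a) = x).
    { apply (top_unit_of_divxx A le mul ldiv rdiv residuated mulxx _ le_top).
      - intros x. apply ldivxx_eq.
      - intros x. symmetry. apply ldivxx_rdivyy. }
    split; [exact le_top |]. split; [exact top_unit |].
    exact (brouwerian_of_top_unit A le mul ldiv rdiv residuated mulxx _ le_top top_unit).
  - intros A le mul ldiv rdiv one [residuated one_unit] ldivxx mulxx.
    apply (brouwerian_of_top_unit A le mul ldiv rdiv residuated mulxx); trivial.
    intros x. rewrite <- (ldivxx x).
    exact (le_ldivxx A le mul ldiv rdiv residuated mulxx x).
Qed.
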